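(* In the oligopoly game below, there exists an equilibrium $(\mathbf A^{\rm d},\mathbf q^{\rm d})$ with $$\mathbf A^{\rm d}\mathbf q^{\rm d}=\boldsymbol\beta,\qquad \mathbf q^{\rm d}=\frac{\boldsymbol\gamma}{2+\alpha}$$ if and only if $r(\boldsymbol\gamma)\le 2+\alpha\le R(\boldsymbol\gamma)$.
   Context: Model: integers $n\ge2$, $m\ge2$; $\alpha>0$, $\boldsymbol\beta\in\mathbb R^m$ with $\|\boldsymbol\beta\|_2=1$, $\boldsymbol\gamma\in\mathbb R^n$ with all $\gamma_i>0$. $\mathcal A$ is the set of real $m\times n$ matrices $\mathbf A=[\mathbf a_1,\dots,\mathbf a_n]$ with all $\|\mathbf a_i\|_2=1$. Firm $i$ chooses a unit vector $\mathbf a_i\in\mathbb R^m$ and $q_i\ge0$, earning $\Pi_i=\alpha q_i\mathbf a_i^\top(\boldsymbol\beta-\sum_{j\ne i}q_j\mathbf a_j)-(1+\alpha)q_i^2+\gamma_iq_i$. An equilibrium is $(\mathbf A^*,\mathbf q^* )$ in which each $(\mathbf a_i^*,q_i^* )$ maximizes $\Pi_i$ given the others' choices. $R(\mathbf v)=\|\mathbf v\|_1$, $r(\mathbf v)=2\|\mathbf v\|_\infty-\|\mathbf v\|_1$. *)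

From HB Require Import structures.
From mathcomp Require Import all_boot all_order all_algebra.
From mathcomp Require Import reals.
Set Implicit Arguments. Unset Strict Implicit. Unset Printing Implicit Defensive.
Import Order.TTheory GRing.Theory Num.Theory.
Local Open Scope ring_scope.

Section Oligopoly.
Variable R : realType.

Definition sqnorm (k : nat) (v : 'cV[R]_k) : R := \sum_(l < k) (v l 0) ^+ 2.
Definition unit_vec (k : nat) (v : 'cV[R]_k) : Prop := sqnorm v = 1.

Definition norm1 (k : nat) (v : 'cV[R]_k) : R := \sum_(l < k) `|v l 0|.
Definition normoo (k : nat) (v : 'cV[R]_k) : R := \big[Num.max/0]_(l < k) `|v l 0|.
Definition Rbig (k : nat) (v : 'cV[R]_k) : R := norm1 v.
Definition rsmall (k : nat) (v : 'cV[R]_k) : R := 2 * normoo v - norm1 v.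

Definition profit (m n : nat) (alpha : R) (beta : 'cV[R]_m) (gamma : 'cV[R]_n)
  (A : 'M[R]_(m, n)) (q : 'cV[R]_n) (i : 'I_n) (a : 'cV[R]_m) (qi : R) : R :=
  alpha * qi * (a^T *m (beta - \sum_(j < n | j != i) q j 0 *: col j A)) 0 0
  - (1 + alpha) * qi ^+ 2 + gamma i 0 * qi.

Definition equilibrium (m n : nat) (alpha : R) (beta : 'cV[R]_m) (gamma : 'cV[R]_n)
  (A : 'M[R]_(m, n)) (q : 'cV[R]_n) : Prop :=
  (forall i : 'I_n, unit_vec (col i A)) /\
  (forall i : 'I_n, 0 <= q i 0) /\
  (forall (i : 'I_n) (a : 'cV[R]_m) (qi : R), unit_vec a -> 0 <= qi ->
      profit alpha beta gamma A q i a qi <= profit alpha beta gamma A q i (col i A) (q i 0)).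

End Oligopoly.

(* Write a_j for the columns of A and b = A q.  Necessity: pairing b with
   itself and with a_k gives 1 <= sum q and 2 q_k - sum q <= <b, a_k> <= 1,
   i.e. the sides q_j and a side of length 1 satisfy the polygon inequalities.
   Sufficiency: these inequalities let one close a planar polygon, so unit
   vectors a_j in the plane spanned by beta and a unit vector orthogonal to it
   satisfy sum q_j a_j = beta.  Then firm i faces the residual demand
   q_i a_i, and since gamma_i = (2 + alpha) q_i its best response is
   (a_i, q_i). *)

From HB Require Import structures.
From mathcomp Require Import all_boot all_order all_algebra.
From mathcomp Require Import reals ring lra.
Import Order.TTheory GRing.Theory Num.Theory.
Local Open Scope ring_scope.
Set Implicit Arguments. Unset Strict Implicit.

Section PlanarPolygon.
Variable R : rcfType.

Lemma circles_meet (tx ty L W L' : R) :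
  tx ^+ 2 + ty ^+ 2 = L ^+ 2 -> 0 <= L -> 0 <= W -> 0 <= L' ->
  L - W <= L' -> W - L <= L' -> L' <= L + W ->
  exists ux uy, ux ^+ 2 + uy ^+ 2 = 1 /\
    (tx - W * ux) ^+ 2 + (ty - W * uy) ^+ 2 = L' ^+ 2.
Proof.
move=> tL L0 W0 L'0 h1 h2 h3.
have [W_eq0|Wn0] := eqVneq W 0.
  exists 1, 0; split; first ring.
  by rewrite W_eq0 !mul0r !subr0 tL; congr (_ ^+ 2); lra.
have [L_eq0|Ln0] := eqVneq L 0.
  have tx0 : tx = 0 by rewrite L_eq0 in tL; nra.
  have ty0 : ty = 0 by rewrite L_eq0 in tL; nra.
  exists 1, 0; split; first ring.
  have -> : L' = W by lra.
  by rewrite tx0 ty0; ring.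
have Wp : 0 < W by rewrite lt_def Wn0.
have Lp : 0 < L by rewrite lt_def Ln0.
(* [u] has component [k / L] along [t] and [r / L] orthogonal to it, where
   [k] comes from the law of cosines in the triangle with sides [L, W, L']. *)
pose k := (L ^+ 2 + W ^+ 2 - L' ^+ 2) / (2 * W).
have ek : k * (2 * W) = L ^+ 2 + W ^+ 2 - L' ^+ 2 by rewrite /k; field; lra.
have k_le : k ^+ 2 <= L ^+ 2.
  have : k <= L by nra.
  have : - L <= k by nra.
  nra.
pose r := Num.sqrt (L ^+ 2 - k ^+ 2).
have r2 : r ^+ 2 = L ^+ 2 - k ^+ 2 by rewrite sqr_sqrtr // subr_ge0.
exists ((k * tx - r * ty) / L ^+ 2), ((k * ty + r * tx) / L ^+ 2); split.
  have -> : ((k * tx - r * ty) / L ^+ 2) ^+ 2 + ((k * ty + r * tx) / L ^+ 2) ^+ 2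
            = (k ^+ 2 + r ^+ 2) * (tx ^+ 2 + ty ^+ 2) / (L ^+ 2) ^+ 2
    by field.
  by rewrite r2 tL; field.
have -> : (tx - W * ((k * tx - r * ty) / L ^+ 2)) ^+ 2
            + (ty - W * ((k * ty + r * tx) / L ^+ 2)) ^+ 2
          = (tx ^+ 2 + ty ^+ 2) * (1 - k * (2 * W) / L ^+ 2
              + W ^+ 2 * (k ^+ 2 + r ^+ 2) / (L ^+ 2) ^+ 2)
  by field.
by rewrite r2 tL ek; field.
Qed.

Lemma unit_dirs_sum (n : nat) (w : nat -> R) (L tx ty : R) :
  (forall i, (i < n)%N -> 0 <= w i) -> tx ^+ 2 + ty ^+ 2 = L ^+ 2 -> 0 <= L ->
  L <= \sum_(i < n) w i -> (forall i, (i < n)%N -> 2 * w i <= L + \sum_(j < n) w j) ->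
  exists x y : nat -> R, (forall i, (i < n)%N -> x i ^+ 2 + y i ^+ 2 = 1) /\
    \sum_(i < n) w i * x i = tx /\ \sum_(i < n) w i * y i = ty.
Proof.
elim: n L tx ty => [|n IH] L tx ty w0 tL L0 L_le w_le.
  have L_eq0 : L = 0 by rewrite big_ord0 in L_le; lra.
  rewrite L_eq0 in tL.
  have tx0 : tx = 0 by nra.
  have ty0 : ty = 0 by nra.
  by exists (fun=> 0), (fun=> 0); rewrite !big_ord0 tx0 ty0.
rewrite big_ord_recr /= in L_le w_le.
set S := \sum_(i < n) w i in L_le w_le.
have w0n : forall i, (i < n)%N -> 0 <= w i by move=> i /ltnW; exact: w0.
have wn0 : 0 <= w n by exact: w0.
have wn_le := w_le n (ltnSn n).
have S0 : 0 <= S by apply: sumr_ge0 => i _; exact: w0n.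
have wi_le_S i : (i < n)%N -> w i <= S.
  move=> lt_in; rewrite /S (bigD1 (Ordinal lt_in)) //= lerDl.
  by apply: sumr_ge0 => j _; exact: w0n.
(* Peel off the last side; the others must then close on a target of length
   [L'], taken as large as they allow. *)
pose L' := Num.min S (L + w n).
have [L'0 L'_tri L'_le_S w_le'] : [/\ 0 <= L',
    [/\ L - w n <= L', w n - L <= L' & L' <= L + w n], L' <= S &
    forall i, (i < n)%N -> 2 * w i <= L' + S].
  rewrite /L'; case: (leP S (L + w n)) => hS; split; try split; try lra.
    by move=> i /wi_le_S; lra.
  by move=> i lt_in; have := w_le i (ltnW lt_in); lra.
case: L'_tri => tri1 tri2 tri3.
have [ux [uy [u1 t'L']]] := circles_meet tL L0 wn0 L'0 tri1 tri2 tri3.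
have [x [y [xy1 [sx sy]]]] := IH L' _ _ w0n t'L' L'0 L'_le_S w_le'.
exists (fun i => if i == n then ux else x i), (fun i => if i == n then uy else y i).
split.
  by move=> i; rewrite ltnS leq_eqVlt; case: eqP => //= _; exact: xy1.
have drop_last (f : nat -> R) u :
    \sum_(i < n) w i * (if (i : nat) == n then u else f i) = \sum_(i < n) w i * f i.
  by apply: eq_bigr => i _; rewrite ltn_eqF.
by rewrite !big_ord_recr /= !eqxx !drop_last sx sy; split; ring.
Qed.

End PlanarPolygon.

Section UnitColumns.
Variable R : realType.

Definition vdot (m : nat) (u v : 'cV[R]_m) : R := (u^T *m v) 0 0.

Lemma vdotE m (u v : 'cV[R]_m) : vdot u v = \sum_l u l 0 * v l 0.
Proof. by rewrite /vdot mxE; apply: eq_bigr => l _; rewrite mxE. Qed.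

Lemma vdotC m (u v : 'cV[R]_m) : vdot u v = vdot v u.
Proof. by rewrite !vdotE; apply: eq_bigr => l _; rewrite mulrC. Qed.

Lemma vdotDr m (u v w : 'cV[R]_m) : vdot u (v + w) = vdot u v + vdot u w.
Proof. by rewrite /vdot mulmxDr mxE. Qed.

Lemma vdotNr m (u v : 'cV[R]_m) : vdot u (- v) = - vdot u v.
Proof. by rewrite /vdot mulmxN mxE. Qed.

Lemma vdotZr m a (u v : 'cV[R]_m) : vdot u (a *: v) = a * vdot u v.
Proof. by rewrite /vdot -scalemxAr mxE. Qed.

Lemma vdot_sumr m I (r : seq I) (P : pred I) (u : 'cV[R]_m) F :
  vdot u (\sum_(i <- r | P i) F i) = \sum_(i <- r | P i) vdot u (F i).
Proof. by rewrite /vdot mulmx_sumr summxE. Qed.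

Lemma vdotDl m (u v w : 'cV[R]_m) : vdot (u + v) w = vdot u w + vdot v w.
Proof. by rewrite vdotC vdotDr !(vdotC w). Qed.

Lemma vdotNl m (u v : 'cV[R]_m) : vdot (- u) v = - vdot u v.
Proof. by rewrite vdotC vdotNr vdotC. Qed.

Lemma vdotZl m a (u v : 'cV[R]_m) : vdot (a *: u) v = a * vdot u v.
Proof. by rewrite vdotC vdotZr vdotC. Qed.

Lemma vdot_suml m I (r : seq I) (P : pred I) (v : 'cV[R]_m) F :
  vdot (\sum_(i <- r | P i) F i) v = \sum_(i <- r | P i) vdot (F i) v.
Proof. by rewrite vdotC vdot_sumr; apply: eq_bigr => i _; rewrite vdotC. Qed.

Lemma vdot_deltar m (u : 'cV[R]_m) k : vdot u (delta_mx k 0) = u k 0.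
Proof. by rewrite /vdot -colE !mxE. Qed.

Lemma vdotvv m (u : 'cV[R]_m) : vdot u u = sqnorm u.
Proof. by rewrite vdotE; apply: eq_bigr => l _; rewrite expr2. Qed.

Lemma unit_vecE m (u : 'cV[R]_m) : unit_vec u <-> vdot u u = 1.
Proof. by rewrite vdotvv. Qed.

Lemma sqnorm_ge0 m (u : 'cV[R]_m) : 0 <= sqnorm u.
Proof. by apply: sumr_ge0 => l _; exact: sqr_ge0. Qed.

Lemma unit_vdot_le1 m (u v : 'cV[R]_m) :
  unit_vec u -> unit_vec v -> `|vdot u v| <= 1.
Proof.
move=> /unit_vecE uu /unit_vecE vv.
have := sqnorm_ge0 (u - v); have := sqnorm_ge0 (u + v).
rewrite -!vdotvv !(vdotDl, vdotDr, vdotNl, vdotNr) uu vv (vdotC v u) ler_norml.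
by move=> *; apply/andP; split; lra.
Qed.

Lemma mulmx_sum_col m n (A : 'M[R]_(m, n)) (q : 'cV[R]_n) :
  A *m q = \sum_j q j 0 *: col j A.
Proof.
apply/matrixP => l z; rewrite ord1 !mxE summxE; apply: eq_bigr => j _.
by rewrite !mxE mulrC.
Qed.

Lemma vdot_mulmxl m n (A : 'M[R]_(m, n)) (q : 'cV[R]_n) v :
  vdot (A *m q) v = \sum_j q j 0 * vdot (col j A) v.
Proof. by rewrite mulmx_sum_col vdot_suml; apply: eq_bigr => j _; rewrite vdotZl. Qed.

Lemma exists_unit_orthogonal m (b : 'cV[R]_m) :
  (2 <= m)%N -> unit_vec b -> exists e : 'cV[R]_m, unit_vec e /\ vdot b e = 0.
Proof.
move=> m_ge2 /unit_vecE bb.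
have [k bk_lt1] : exists k, b k 0 ^+ 2 < 1.
  pose k0 : 'I_m := Ordinal (ltnW m_ge2); pose k1 : 'I_m := Ordinal m_ge2.
  have : b k0 0 ^+ 2 + b k1 0 ^+ 2 <= 1.
    rewrite -bb vdotvv /sqnorm (bigD1 k0) //= (bigD1 k1) //= addrA lerDl.
    by apply: sumr_ge0 => l _; exact: sqr_ge0.
  have := sqr_ge0 (b k1 0).
  have [|] := ltP (b k0 0 ^+ 2) 1; [by exists k0 | exists k1; lra].
pose v := delta_mx k 0 - b k 0 *: b.
have bv : vdot b v = 0 by rewrite vdotDr vdotNr vdotZr vdot_deltar bb; ring.
have vv : vdot v v = 1 - b k 0 ^+ 2.
  rewrite {1}/v vdotDl vdotNl vdotZl bv vdotC vdot_deltar !mxE !eqxx /=.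
  by rewrite mulr0 subr0 expr2.
have s_gt0 : 0 < 1 - b k 0 ^+ 2 by rewrite subr_gt0.
exists ((Num.sqrt (1 - b k 0 ^+ 2))^-1 *: v); split.
  apply/unit_vecE; rewrite vdotZl vdotZr vv mulrA -expr2 exprVn.
  by rewrite sqr_sqrtr ?mulVf // ?ltW // gt_eqF.
by rewrite vdotZr bv mulr0.
Qed.

Definition closes_unit_polygon n (q : 'cV[R]_n) : Prop :=
  1 <= \sum_j q j 0 /\ forall k, 2 * q k 0 <= 1 + \sum_j q j 0.

Lemma closes_unit_polygon_mulmx m n (A : 'M[R]_(m, n)) (q : 'cV[R]_n) :
  (forall j, unit_vec (col j A)) -> (forall j, 0 <= q j 0) -> unit_vec (A *m q) ->
  closes_unit_polygon q.
Proof.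
move=> Aunit q0 Aq_unit; split.
  have /unit_vecE <- := Aq_unit.
  rewrite vdot_mulmxl; apply: ler_sum => j _; rewrite -[leRHS]mulr1 ler_wpM2l //.
  exact: le_trans (ler_norm _) (unit_vdot_le1 _ _).
move=> k.
have := unit_vdot_le1 Aq_unit (Aunit k).
rewrite vdot_mulmxl (bigD1 k) //= (proj1 (unit_vecE _) (Aunit k)) mulr1.
have others : - \sum_(j | j != k) q j 0
              <= \sum_(j | j != k) q j 0 * vdot (col j A) (col k A).
  rewrite -sumrN; apply: ler_sum => j _; rewrite -mulrN1 ler_wpM2l //.
  by have := unit_vdot_le1 (Aunit j) (Aunit k); rewrite ler_norml => /andP[].
rewrite ler_norml [X in _ <= 1 + X](bigD1 k) //= => /andP[_ up]; lra.
Qed.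

Lemma exists_unit_cols_mulmx m n (b : 'cV[R]_m) (q : 'cV[R]_n) :
  (2 <= m)%N -> unit_vec b -> (forall j, 0 <= q j 0) -> closes_unit_polygon q ->
  exists A : 'M[R]_(m, n), (forall j, unit_vec (col j A)) /\ A *m q = b.
Proof.
move=> m_ge2 b_unit q0 [sum_ge1 q_le].
have [e [/unit_vecE ee be]] := exists_unit_orthogonal m_ge2 b_unit.
have /unit_vecE bb := b_unit.
pose w i := if (insub i : option 'I_n) is Some j then q j 0 else 0.
have wE (j : 'I_n) : w j = q j 0 by rewrite /w valK.
have sumw : \sum_(i < n) w i = \sum_j q j 0 by apply: eq_bigr => j _; rewrite wE.
have [x [y [xy1 [sx sy]]]] : exists x y : nat -> R,
    (forall i, (i < n)%N -> x i ^+ 2 + y i ^+ 2 = 1) /\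
    \sum_(i < n) w i * x i = 1 /\ \sum_(i < n) w i * y i = 0.
  apply: unit_dirs_sum; rewrite ?sumw //.
  - by move=> i lt_in; rewrite (wE (Ordinal lt_in)).
  - by rewrite expr0n /= addr0 expr1n.
  - by move=> i lt_in; rewrite (wE (Ordinal lt_in)).
pose A : 'M[R]_(m, n) := \matrix_(l, j) (x j * b l 0 + y j * e l 0).
have colA j : col j A = x j *: b + y j *: e.
  by apply/matrixP => l z; rewrite ord1 !mxE.
exists A; split.
  move=> j; apply/unit_vecE; rewrite colA.
  rewrite !(vdotDl, vdotDr, vdotZl, vdotZr) bb ee be (vdotC e) be.
  by rewrite -[RHS](xy1 j (ltn_ord j)); ring.
rewrite mulmx_sum_col.
under eq_bigr do rewrite colA scalerDr !scalerA.
rewrite big_split -!scaler_suml /=.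
have -> : \sum_j q j 0 * x j = 1 by rewrite -[RHS]sx; apply: eq_bigr => j _; rewrite wE.
have -> : \sum_j q j 0 * y j = 0 by rewrite -[RHS]sy; apply: eq_bigr => j _; rewrite wE.
by rewrite scale1r scale0r addr0.
Qed.

Lemma aligned_equilibrium m n (alpha : R) (b : 'cV[R]_m) (gamma : 'cV[R]_n)
  (A : 'M[R]_(m, n)) (q : 'cV[R]_n) :
  0 <= alpha -> (forall j, unit_vec (col j A)) -> (forall j, 0 <= q j 0) ->
  A *m q = b -> gamma = (2 + alpha) *: q -> equilibrium alpha b gamma A q.
Proof.
move=> alpha0 Aunit q0 Aqb ->; split=> //; split=> // i a x a_unit x0.
have residual : b - \sum_(j < n | j != i) q j 0 *: col j A = q i 0 *: col i A.
  by rewrite -Aqb mulmx_sum_col (bigD1 i) //= addrK.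
rewrite /profit residual -/(vdot a _) -/(vdot (col i A) _) !vdotZr !mxE.
rewrite (proj1 (unit_vecE _) (Aunit i)).
have d_le1 : vdot a (col i A) <= 1.
  exact: le_trans (ler_norm _) (unit_vdot_le1 a_unit (Aunit i)).
set p := q i 0; have p0 : 0 <= p := q0 i.
(* Facing the residual demand [p *: col i A], the profit is at most
   [(1 + alpha) (2 p x - x^2) <= (1 + alpha) p^2], the profit of [(col i A, p)]. *)
have := ler_wpM2l (mulr_ge0 (mulr_ge0 alpha0 x0) p0) d_le1.
have : 0 <= (1 + alpha) * (p - x) ^+ 2 by rewrite mulr_ge0 ?sqr_ge0 //; lra.
nra.
Qed.

Lemma rsmall_le n (v : 'cV[R]_n) (c : R) : 0 <= c + norm1 v ->
  rsmall v <= c <-> forall k, 2 * `|v k 0| - norm1 v <= c.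
Proof.
move=> c_norm1; rewrite /rsmall; split=> [le_c k | le_c].
  have : `|v k 0| <= normoo v by exact: le_bigmax.
  lra.
suff : normoo v <= (c + norm1 v) / 2 by lra.
apply: bigmax_le => [|k _]; first by rewrite divr_ge0.
by have := le_c k; lra.
Qed.

Lemma closes_unit_polygon_scale n (c : R) (v : 'cV[R]_n) :
  0 < c -> (forall j, 0 <= v j 0) ->
  closes_unit_polygon (c^-1 *: v) <-> rsmall v <= c /\ c <= Rbig v.
Proof.
move=> c_gt0 v0.
have norm1E : norm1 v = \sum_j v j 0 by apply: eq_bigr => j _; rewrite ger0_norm.
set S := \sum_j v j 0 in norm1E.
have S0 : 0 <= S by exact: sumr_ge0.
have sumE : \sum_j (c^-1 *: v) j 0 = S / c.
  by rewrite mulr_suml; apply: eq_bigr => j _; rewrite mxE mulrC.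
have S_iff : 1 <= S / c <-> c <= S by rewrite ler_pdivlMr // mul1r.
have k_iff k : 2 * (c^-1 *: v) k 0 <= 1 + S / c <-> 2 * `|v k 0| - S <= c.
  rewrite mxE ger0_norm // -(ler_pM2r c_gt0).
  have -> : 2 * (c^-1 * v k 0) * c = 2 * v k 0 by field; rewrite gt_eqF.
  have -> : (1 + S / c) * c = c + S by field; rewrite gt_eqF.
  by split; lra.
have c_norm1 : 0 <= c + norm1 v by rewrite norm1E addr_ge0 // ltW.
rewrite /closes_unit_polygon /Rbig sumE (rsmall_le c_norm1) norm1E.
split=> -[h1 h2]; split.
- by move=> k; apply/k_iff.
- exact/S_iff.
- exact/S_iff.
- by move=> k; apply/k_iff.
Qed.

End UnitColumns.

Theorem proposition3 (R : realType) (m n : nat) (hn : (2 <= n)%N) (hm : (2 <= m)%N)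
  (alpha : R) (beta : 'cV[R]_m) (gamma : 'cV[R]_n)
  (halpha : 0 < alpha) (hbeta : unit_vec beta) (hgamma : forall i : 'I_n, 0 < gamma i 0) :
  (exists (A : 'M[R]_(m, n)) (q : 'cV[R]_n),
      equilibrium alpha beta gamma A q /\
      A *m q = beta /\ q = (2 + alpha)^-1 *: gamma)
  <-> (rsmall gamma <= 2 + alpha /\ 2 + alpha <= Rbig gamma).
Proof.
set c := 2 + alpha.
have c_gt0 : 0 < c by rewrite /c; lra.
have gamma0 j : 0 <= gamma j 0 by exact: ltW.
have q0 j : 0 <= (c^-1 *: gamma) j 0 by rewrite mxE mulr_ge0 // invr_ge0 ltW.
rewrite -(closes_unit_polygon_scale c_gt0 gamma0); split.
  move=> [A [q [[Aunit _] [Aqb q_def]]]]; subst q.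
  by apply: closes_unit_polygon_mulmx Aunit q0 _; rewrite Aqb.
move=> poly.
have [A [Aunit Aqb]] := exists_unit_cols_mulmx hm hbeta q0 poly.
exists A, (c^-1 *: gamma); split=> //.
apply: aligned_equilibrium (ltW halpha) Aunit q0 Aqb _.
by rewrite scalerA mulfV ?gt_eqF // scale1r.
Qed.
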